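(* Let $B\in\mathbb{C}^{n\times k}$ with $k\le n$ and $\operatorname{rank}(B)=k$, and let $P_*=B(B^{\mathrm{H}}B)^{-1/2}$ be the unique orthonormal polar factor of $B$. Given $P\in\mathbb{C}^{n\times k}$ with $P^{\mathrm{H}}P=I_k$, let $$\eta=\|B\|_{\mathrm{tr}}-\operatorname{Re}(\operatorname{tr}(P^{\mathrm{H}}B)),\qquad \epsilon=\sqrt{\frac{2\eta}{\sigma_{\min}(B)}}.$$ Then: (a) $$\frac{\|B-P(P^{\mathrm{H}}B)\|_{\mathrm{F}}}{\|B\|_2}\le\|\sin\Theta({\cal R}(P),{\cal R}(P_* ))\|_{\mathrm{F}}\le\epsilon;$$ (b) if $P^{\mathrm{H}}B$ is Hermitian positive definite, then $$\|P-P_*\|_{\mathrm{F}}\le\left(1+\frac{2\|B\|_2}{\sigma_{\min}(B)+\sigma_{\min}(P^{\mathrm{H}}B)}\right)\epsilon;$$ (c) if ${\cal R}(P)={\cal R}(P_* )$, then $\|P-P_*\|_{\mathrm{F}}\le\epsilon$.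
   Context: For a matrix $X$, $X^{\mathrm{H}}$ is its conjugate transpose, ${\cal R}(X)$ its column space, $\|X\|_2$ its largest singular value, $\|X\|_{\mathrm{F}}=\sqrt{\operatorname{tr}(X^{\mathrm{H}}X)}$ its Frobenius norm. For $B\in\mathbb{C}^{n\times k}$ with singular values $\sigma_1(B)\ge\cdots\ge\sigma_k(B)$, $\sigma_{\min}(B)=\sigma_k(B)$ and $\|B\|_{\mathrm{tr}}=\sum_{i=1}^k\sigma_i(B)$ (trace/nuclear norm); $\operatorname{Re}$ denotes the real part. A polar decomposition of $B$ is $B=P\Lambda$ with $P^{\mathrm{H}}P=I_k$ and $\Lambda\succeq0$; $P$ is an orthonormal polar factor. For two $k$-dimensional subspaces ${\cal X}={\cal R}(X)$, ${\cal Y}={\cal R}(Y)$ of $\mathbb{C}^n$ with $X,Y$ having orthonormal columns, the canonical angles are $\theta_i=\arccos\sigma_i(X^{\mathrm{H}}Y)\in[0,\pi/2]$, $i=1,\dots,k$; $\Theta({\cal X},{\cal Y})=\operatorname{diag}(\theta_1,\dots,\theta_k)$ and $\|\sin\Theta({\cal X},{\cal Y})\|_{\mathrm{F}}=\big(\sum_{i=1}^k\sin^2\theta_i\big)^{1/2}$. *)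

(* complex matrices over an arbitrary numClosedFieldType C
   (e.g. algC, or complex R for a real closed field R). *)
From HB Require Import structures.
From mathcomp Require Import all_boot all_order all_algebra.
From mathcomp Require Import sesquilinear spectral.
Set Implicit Arguments. Unset Strict Implicit. Unset Printing Implicit Defensive.
Import Order.TTheory GRing.Theory Num.Theory Num.Def.
Local Open Scope ring_scope.

Section Defs.
Variable C : numClosedFieldType.

Definition ctmx m n (X : 'M[C]_(m, n)) : 'M[C]_(n, m) := (map_mx conjC X)^T.

Definition hermitian n (A : 'M[C]_n) : Prop := ctmx A = A.

Definition psd n (A : 'M[C]_n) : Prop :=
  hermitian A /\ forall v : 'cV[C]_n, 0 <= (ctmx v *m A *m v) 0 0.
Definition hpd n (A : 'M[C]_n) : Prop :=
  hermitian A /\ forall v : 'cV[C]_n, v != 0 -> 0 < (ctmx v *m A *m v) 0 0.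

Definition orthonormal_cols n k (X : 'M[C]_(n, k)) : Prop := ctmx X *m X = 1%:M.

Definition polar_factor n k (B P : 'M[C]_(n, k)) : Prop :=
  orthonormal_cols P /\ exists Lambda : 'M[C]_k, psd Lambda /\ B = P *m Lambda.

(* singular values of B (n x k): square roots of the k eigenvalues (with
   multiplicity) of the Hermitian PSD matrix B^H B, listed in the order given
   by its spectral (unitary) diagonalization. *)
Definition sv n k (B : 'M[C]_(n, k)) (i : 'I_k) : C :=
  sqrtC (spectral_diag (ctmx B *m B) 0 i).

Definition norm2 n k (B : 'M[C]_(n, k)) : C := \big[Order.max/0]_i sv B i.

Definition smin n k (B : 'M[C]_(n, k)) : C := \big[Order.min/norm2 B]_i sv B i.

Definition trnorm n k (B : 'M[C]_(n, k)) : C := \sum_i sv B i.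

Definition frob m n (X : 'M[C]_(m, n)) : C := sqrtC (\tr (ctmx X *m X)).

(* ||sin Theta(R(X), R(Y))||_F for X, Y with orthonormal columns:
   cos theta_i = sigma_i(X^H Y), so sin^2 theta_i = 1 - sigma_i(X^H Y)^2. *)
Definition sinThetaF n k (X Y : 'M[C]_(n, k)) : C :=
  sqrtC (\sum_i (1 - sv (ctmx X *m Y) i ^+ 2)).

Definition same_range n k (X Y : 'M[C]_(n, k)) : Prop := (X^T == Y^T)%MS.

End Defs.

From Pilot Require Import Defs.
From HB Require Import structures.
From mathcomp Require Import all_boot all_order all_algebra.
From mathcomp Require Import sesquilinear spectral.
From mathcomp Require Import ring.
Import Order.TTheory GRing.Theory Num.Theory Num.Def.
Local Open Scope ring_scope.
Local Open Scope sesquilinear_scope.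
Set Implicit Arguments. Unset Strict Implicit. Unset Printing Implicit Defensive.

(* Diagonalise B^H B = V^H diag(sigma_i^2) V.  The psd factor Lambda of
   B = Ps Lambda satisfies Lambda^2 = B^H B, so uniqueness of psd square roots
   gives Lambda = V^H diag(sigma_i) V.  With X = P V^H, Y = Ps V^H and
   N = X^H Y we get Re tr(P^H B) = sum_i sigma_i Re N_ii, while
   ||P - Ps||_F^2 = ||X - Y||_F^2 = sum_i 2 (1 - Re N_ii) with nonnegative
   terms; hence eta = sum_i sigma_i (1 - Re N_ii) >= sigma_min ||P - Ps||_F^2 / 2,
   i.e. ||P - Ps||_F <= eps for EVERY P with orthonormal columns, which already
   gives (b) and (c).
   For (a), let M = P^H Ps and Z = Ps - P M.  Then Z^H Z = I - M^H M, so
   ||Z||_F = ||sin Theta||_F, and (P - Ps)^H (P - Ps) = (I - M)^H (I - M) + Z^H Z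
   bounds it by ||P - Ps||_F.  Finally B - P P^H B = Z Lambda, whose Frobenius
   norm is at most ||Lambda||_2 ||Z||_F = ||B||_2 ||Z||_F. *)

Section RealExtrema.
Variable R : numDomainType.

Lemma real_le_bigmax (I : eqType) (r : seq I) (F : I -> R) x0 j :
  x0 \is Num.real -> (forall i, F i \is Num.real) -> j \in r ->
  F j <= \big[Order.max/x0]_(i <- r) F i.
Proof.
move=> x0R FR; elim: r => // a r IHr; rewrite inE big_cons.
rewrite comparable_le_max ?real_comparable ?bigmax_real //.
by case/orP => [/eqP->|/IHr->]; rewrite ?lexx ?orbT.
Qed.

Lemma real_bigmin_le (I : eqType) (r : seq I) (F : I -> R) x0 j :
  x0 \is Num.real -> (forall i, F i \is Num.real) -> j \in r ->
  \big[Order.min/x0]_(i <- r) F i <= F j.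
Proof.
move=> x0R FR; elim: r => // a r IHr; rewrite inE big_cons.
rewrite comparable_ge_min ?real_comparable ?bigmin_real //.
by case/orP => [/eqP->|/IHr->]; rewrite ?lexx ?orbT.
Qed.

End RealExtrema.

Section PolarFactor.
Variable C : numClosedFieldType.
Implicit Types m n p k : nat.

Local Notation gram A := (ctmx A *m A).
Local Notation frob2 A := (\tr (gram A)).

Lemma ctmxE m n (A : 'M[C]_(m, n)) i j : ctmx A i j = (A j i)^*.
Proof. by rewrite !mxE. Qed.

Lemma ctmxK m n (A : 'M[C]_(m, n)) : ctmx (ctmx A) = A.
Proof. by apply/matrixP => i j; rewrite !ctmxE conjCK. Qed.

Lemma ctmx_mul m n p (A : 'M[C]_(m, n)) (B : 'M[C]_(n, p)) :
  ctmx (A *m B) = ctmx B *m ctmx A.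
Proof. by rewrite /ctmx map_mxM trmx_mul. Qed.

Lemma ctmxB m n (A B : 'M[C]_(m, n)) : ctmx (A - B) = ctmx A - ctmx B.
Proof. by rewrite /ctmx map_mxB linearB. Qed.

Lemma ctmx1 n : ctmx (1%:M : 'M[C]_n) = 1%:M.
Proof. by rewrite /ctmx map_mx1 trmx1. Qed.

Lemma trmxC_ctmx m n (A : 'M[C]_(m, n)) : A ^t* = ctmx A.
Proof. by rewrite /ctmx map_trmx. Qed.

Lemma gram_diagE m n (A : 'M[C]_(m, n)) i : (gram A) i i = \sum_j `|A j i| ^+ 2.
Proof. by rewrite mxE; apply: eq_bigr => j _; rewrite ctmxE normCK mulrC. Qed.

Lemma gram_diag_ge0 m n (A : 'M[C]_(m, n)) i : 0 <= (gram A) i i.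
Proof. by rewrite gram_diagE sumr_ge0 // => j _; rewrite exprn_ge0. Qed.

Lemma frob2_ge0 m n (A : 'M[C]_(m, n)) : 0 <= frob2 A.
Proof. by rewrite sumr_ge0 // => i _; rewrite gram_diag_ge0. Qed.

Lemma frob_ge0 m n (A : 'M[C]_(m, n)) : 0 <= frob A.
Proof. by rewrite sqrtC_ge0 frob2_ge0. Qed.

Lemma ler_frob m n p q (A : 'M[C]_(m, n)) (A' : 'M[C]_(p, q)) :
  (frob A <= frob A') = (frob2 A <= frob2 A').
Proof. by rewrite ler_sqrtC ?nnegrE ?frob2_ge0. Qed.

Lemma gram_diag_eq0 m n (A : 'M[C]_(m, n)) i : (gram A) i i = 0 -> col i A = 0.
Proof.
rewrite gram_diagE => /eqP; rewrite psumr_eq0 => [/allP A0|j _]; last exact: exprn_ge0.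
apply/matrixP => j l; rewrite !mxE.
by have /implyP/(_ isT) := A0 j (mem_index_enum j); rewrite sqrf_eq0 normr_eq0 => /eqP.
Qed.

Lemma gram_cV_eq0 n (v : 'cV[C]_n) : (gram v) 0 0 = 0 -> v = 0.
Proof. by move/gram_diag_eq0; rewrite col_id. Qed.

Lemma col_neq0_full m n (A : 'M[C]_(m, n)) i : \rank A = n -> col i A != 0.
Proof.
move=> rkA; have /row_free_inj inj : row_free A^T by rewrite /row_free mxrank_tr rkA.
apply/eqP => /(congr1 trmx); rewrite tr_col rowE trmx0 -(mul0mx _ A^T) => /inj.
by move/matrixP/(_ 0 i); rewrite !mxE !eqxx => /eqP; rewrite oner_eq0.
Qed.

Lemma unitarymx_ctmx n (U : 'M[C]_n) :
  U \is unitarymx -> U *m ctmx U = 1%:M /\ ctmx U *m U = 1%:M.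
Proof.
by move=> Uu; rewrite -trmxC_ctmx -invmx_unitary // mulmxV ?mulVmx ?unitarymx_unit.
Qed.

Lemma ctmx_unitary n (U : 'M[C]_n) : (ctmx U \is unitarymx) = (U \is unitarymx).
Proof. by rewrite -trmxC_ctmx trmxC_unitary. Qed.

Lemma frob2_mulmx_unitary m n (A : 'M[C]_(m, n)) (U : 'M[C]_n) :
  U \is unitarymx -> frob2 (A *m U) = frob2 A.
Proof.
case/unitarymx_ctmx => UU _.
by rewrite ctmx_mul mxtrace_mulC !mulmxA -(mulmxA _ U) UU mulmx1 mxtrace_mulC.
Qed.

Definition rsvec m k (A : 'M[C]_(m, k)) : 'M[C]_k := spectralmx (gram A).

Lemma rsvec_unitary m k (A : 'M[C]_(m, k)) : rsvec A \is unitarymx.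
Proof. exact: spectral_unitarymx. Qed.

Lemma gram_spectralE m k (A : 'M[C]_(m, k)) :
  gram A = ctmx (rsvec A) *m diag_mx (spectral_diag (gram A)) *m rsvec A.
Proof.
rewrite -[ctmx (rsvec A)]trmxC_ctmx -invmx_unitary ?rsvec_unitary //.
apply/orthomx_spectralP.
by apply/normalmxP; rewrite trmxC_ctmx ctmx_mul ctmxK.
Qed.

Lemma spectral_diag_gram m k (A : 'M[C]_(m, k)) i :
  spectral_diag (gram A) 0 i = (gram (A *m ctmx (rsvec A))) i i.
Proof.
have [VV _] := unitarymx_ctmx (rsvec_unitary A).
rewrite ctmx_mul ctmxK mulmxA -(mulmxA _ (ctmx A)) [in RHS]gram_spectralE.
by rewrite !mulmxA VV mul1mx -mulmxA VV mulmx1 mxE eqxx mulr1n.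
Qed.

Lemma sv_ge0 m k (A : 'M[C]_(m, k)) i : 0 <= sv A i.
Proof. by rewrite sqrtC_ge0 spectral_diag_gram gram_diag_ge0. Qed.

Lemma sv_real m k (A : 'M[C]_(m, k)) i : sv A i \is Num.real.
Proof. exact/ger0_real/sv_ge0. Qed.

Lemma sum_sv_sq m k (A : 'M[C]_(m, k)) : \sum_i sv A i ^+ 2 = frob2 A.
Proof.
have [VV _] := unitarymx_ctmx (rsvec_unitary A).
under eq_bigr do rewrite sqrtCK.
by rewrite [in RHS]gram_spectralE mxtrace_mulC mulmxA VV mul1mx mxtrace_diag.
Qed.

Lemma sv_gt0 m k (A : 'M[C]_(m, k)) i : \rank A = k -> 0 < sv A i.
Proof.
move=> rkA; rewrite sqrtC_gt0 lt_def spectral_diag_gram gram_diag_ge0 andbT.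
have rkW : \rank (A *m ctmx (rsvec A)) = k.
  by rewrite mxrankMfree // /row_free mxrank_unitary // ctmx_unitary rsvec_unitary.
by apply/eqP => /gram_diag_eq0 W0; move: (col_neq0_full i rkW); rewrite W0 eqxx.
Qed.

Lemma sv_le_norm2 m k (A : 'M[C]_(m, k)) i : sv A i <= norm2 A.
Proof. by rewrite real_le_bigmax ?real0 ?mem_index_enum //; exact: sv_real. Qed.

Lemma norm2_ge0 m k (A : 'M[C]_(m, k)) : 0 <= norm2 A.
Proof.
apply: (big_ind (fun x => 0 <= x)) => // [x y x0 y0|i _]; last exact: sv_ge0.
by rewrite comparable_le_max ?x0 // real_comparable ?ger0_real.
Qed.

Lemma smin_le_sv m k (A : 'M[C]_(m, k)) i : smin A <= sv A i.
Proof.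
by rewrite real_bigmin_le ?ger0_real ?norm2_ge0 ?mem_index_enum //; exact: sv_real.
Qed.

Lemma smin_ge0 m k (A : 'M[C]_(m, k)) : 0 <= smin A.
Proof.
apply: (big_ind (fun x => 0 <= x)) => [|x y x0 y0|i _]; last exact: sv_ge0.
  exact: norm2_ge0.
by rewrite comparable_le_min ?x0 // real_comparable ?ger0_real.
Qed.

Lemma smin_gt0 m k (A : 'M[C]_(m, k)) : (0 < k)%N -> \rank A = k -> 0 < smin A.
Proof.
move=> k_gt0 rkA.
apply: (big_ind (fun x => 0 < x)) => [|x y x0 y0|i _]; last exact: sv_gt0.
  exact: lt_le_trans (sv_gt0 (Ordinal k_gt0) rkA) (sv_le_norm2 _ _).
by rewrite comparable_lt_min ?x0 // real_comparable ?gtr0_real.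
Qed.

Lemma psd_conj n k (L : 'M[C]_n) (V : 'M[C]_(k, n)) :
  psd L -> psd (V *m L *m ctmx V).
Proof.
move=> [Lh Lpsd]; split; first by rewrite /Defs.hermitian !ctmx_mul ctmxK Lh mulmxA.
by move=> v; have := Lpsd (ctmx V *m v); rewrite ctmx_mul ctmxK !mulmxA.
Qed.

Lemma psd_sqr_diag k (K : 'M[C]_k) (d : 'rV[C]_k) :
  psd K -> K *m K = diag_mx d -> K = diag_mx (\row_i sqrtC (d 0 i)).
Proof.
move=> [Kh Kpsd] KK; apply/matrixP => i j.
pose e : 'cV[C]_k := delta_mx j 0; set s := sqrtC (d 0 j).
have d_ge0 : 0 <= d 0 j by have := gram_diag_ge0 K j; rewrite Kh KK mxE eqxx mulr1n.
have KKe : K *m (K *m e) = s ^+ 2 *: e.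
  apply/matrixP => a b; rewrite mulmxA KK -colE !mxE sqrtCK ord1 andbT.
  by case: eqVneq => [->|]; rewrite ?mulr1n ?mulr1 ?mulr0n ?mulr0.
have Ke : K *m e = s *: e.
  have [s0|s_neq0] := eqVneq s 0.
    rewrite s0 scale0r; apply: gram_cV_eq0.
    by rewrite ctmx_mul Kh -mulmxA KKe s0 expr0n scale0r mulmx0 mxE.
  have s_gt0 : 0 < s by rewrite lt_def s_neq0 sqrtC_ge0.
  (* [w] is an eigenvector of the psd matrix [K] for the eigenvalue [- s < 0]. *)
  pose w := K *m e - s *: e.
  have Kw : K *m w = - s *: w.
    rewrite mulmxBr KKe -(scalemxAr s K e).
    by rewrite scaleNr scalerBr scalerA -expr2 opprB.
  suff /gram_cV_eq0 /eqP : (gram w) 0 0 = 0 by rewrite subr_eq0 => /eqP.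
  apply/eqP; rewrite eq_le gram_diag_ge0 andbT -(pmulr_rle0 _ s_gt0) -oppr_ge0.
  by have := Kpsd w; rewrite -mulmxA Kw -scalemxAr mxE mulNr.
have := congr1 (fun v : 'cV_k => v i 0) Ke; rewrite /= -colE !mxE => ->.
by case: eqVneq => [->|]; rewrite ?mulr1n ?mulr1 ?mulr0n ?mulr0.
Qed.

Lemma polar_psd_factorE n k (B Ps : 'M[C]_(n, k)) (L : 'M[C]_k) :
  orthonormal_cols Ps -> psd L -> B = Ps *m L ->
  L = ctmx (rsvec B) *m diag_mx (\row_i sv B i) *m rsvec B.
Proof.
move=> PsO Lpsd BE; have [Lh _] := Lpsd.
set V := rsvec B; have [VV1 VV2] := unitarymx_ctmx (rsvec_unitary B).
have gramB : gram B = L *m L.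
  by rewrite BE ctmx_mul Lh -mulmxA (mulmxA (ctmx Ps)) PsO mul1mx.
have -> : L = ctmx V *m (V *m L *m ctmx V) *m V.
  by rewrite !mulmxA VV2 mul1mx -mulmxA VV2 mulmx1.
congr (_ *m _ *m _); apply: psd_sqr_diag; first exact: psd_conj.
rewrite !mulmxA -(mulmxA (V *m L)) VV2 mulmx1 -(mulmxA V L L) -gramB.
rewrite [in LHS]gram_spectralE -/V.
by rewrite !mulmxA VV1 mul1mx -mulmxA VV1 mulmx1.
Qed.

Lemma orthonormal_gram_diagB n k (X Y : 'M[C]_(n, k)) i :
  orthonormal_cols X -> orthonormal_cols Y ->
  (gram (X - Y)) i i = 2 * (1 - 'Re ((ctmx X *m Y) i i)).
Proof.
move=> XO YO; set N := ctmx X *m Y.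
have YX : ctmx Y *m X = ctmx N by rewrite ctmx_mul ctmxK.
by rewrite ctmxB mulmxBl !mulmxBr XO YO YX !mxE eqxx mulr1n ReE; field.
Qed.

Lemma orthonormal_cols_mul_unitary n k (Q : 'M[C]_(n, k)) (U : 'M[C]_k) :
  orthonormal_cols Q -> U \is unitarymx -> orthonormal_cols (Q *m U).
Proof.
move=> QO /unitarymx_ctmx[_ UU]; rewrite /orthonormal_cols ctmx_mul.
by rewrite mulmxA -(mulmxA _ (ctmx Q)) QO mulmx1 UU.
Qed.

Lemma polar_trace_bound n k (B Ps P : 'M[C]_(n, k)) (L : 'M[C]_k) :
  orthonormal_cols Ps -> orthonormal_cols P -> psd L -> B = Ps *m L ->
  smin B * frob2 (P - Ps) <= 2 * (trnorm B - 'Re (\tr (ctmx P *m B))).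
Proof.
move=> PsO PO Lpsd BE; set V := rsvec B.
have Vu : ctmx V \is unitarymx by rewrite ctmx_unitary rsvec_unitary.
pose X := P *m ctmx V; pose Y := Ps *m ctmx V; pose N := ctmx X *m Y.
have XO : orthonormal_cols X by exact: orthonormal_cols_mul_unitary.
have YO : orthonormal_cols Y by exact: orthonormal_cols_mul_unitary.
have trE : \tr (ctmx P *m B) = \sum_i N i i * sv B i.
  rewrite [in LHS]BE [in LHS](polar_psd_factorE PsO Lpsd BE) -/V.
  rewrite !mulmxA mxtrace_mulC !mulmxA mul_mx_diag; apply: eq_bigr => i _.
  by rewrite [LHS]mxE [in X in _ * X]mxE /N /X /Y ctmx_mul ctmxK !mulmxA.
have frobE : frob2 (P - Ps) = \sum_i (gram (X - Y)) i i.
  by rewrite -(frob2_mulmx_unitary _ Vu) mulmxBl.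
rewrite trE frobE /trnorm raddf_sum mulr_sumr -sumrB mulr_sumr.
apply: ler_sum => i _; rewrite /= orthonormal_gram_diagB // ReMr ?sv_real //.
have dist_ge0 : 0 <= 2 * (1 - 'Re (N i i)).
  by rewrite -orthonormal_gram_diagB // gram_diag_ge0.
rewrite mulrC [X in _ <= X](_ : _ = 2 * (1 - 'Re (N i i)) * sv B i); last by ring.
by rewrite ler_wpM2l // smin_le_sv.
Qed.

Lemma orthonormal_gram_residual n k (P Ps : 'M[C]_(n, k)) :
  orthonormal_cols P -> orthonormal_cols Ps ->
  gram (Ps - P *m (ctmx P *m Ps)) = 1%:M - gram (ctmx P *m Ps).
Proof.
move=> PO PsO; set M := ctmx P *m Ps.
have PsP : ctmx Ps *m P = ctmx M by rewrite ctmx_mul ctmxK.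
rewrite ctmxB ctmx_mul mulmxBl !mulmxBr PsO mulmxA PsP -!mulmxA -/M.
by rewrite [ctmx P *m (P *m M)]mulmxA PO mul1mx subrr subr0.
Qed.

Lemma orthonormal_gram_dist n k (P Ps : 'M[C]_(n, k)) :
  orthonormal_cols P -> orthonormal_cols Ps ->
  gram (P - Ps) = gram (1%:M - ctmx P *m Ps) + gram (Ps - P *m (ctmx P *m Ps)).
Proof.
move=> PO PsO; rewrite orthonormal_gram_residual //; set M := ctmx P *m Ps.
have PsP : ctmx Ps *m P = ctmx M by rewrite ctmx_mul ctmxK.
rewrite !ctmxB ctmx1 mulmxBl !mulmxBr PO PsO PsP -/M mulmx1 mulmxBl mul1mx.
by apply/matrixP => i j; rewrite !mxE; ring.
Qed.

Lemma sinThetaF_residual n k (P Ps : 'M[C]_(n, k)) :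
  orthonormal_cols P -> orthonormal_cols Ps ->
  sinThetaF P Ps = frob (Ps - P *m (ctmx P *m Ps)).
Proof.
move=> PO PsO; rewrite /sinThetaF /frob orthonormal_gram_residual //.
by rewrite sumrB sum_sv_sq raddfB /= mxtrace1 sumr_const card_ord.
Qed.

Lemma sinThetaF_le_dist n k (P Ps : 'M[C]_(n, k)) :
  orthonormal_cols P -> orthonormal_cols Ps -> sinThetaF P Ps <= frob (P - Ps).
Proof.
move=> PO PsO; rewrite sinThetaF_residual // ler_frob orthonormal_gram_dist //.
by rewrite mxtraceD lerDr frob2_ge0.
Qed.

Lemma frob2_mul_diag m k (W : 'M[C]_(m, k)) (s : 'rV[C]_k) :
  frob2 (W *m diag_mx s) = \sum_i `|s 0 i| ^+ 2 * (gram W) i i.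
Proof.
apply: eq_bigr => i _; rewrite !gram_diagE mulr_sumr; apply: eq_bigr => j _.
by rewrite mul_mx_diag mxE normrM exprMn mulrC.
Qed.

Lemma frob_mul_psd_le n m k (B Ps : 'M[C]_(n, k)) (L : 'M[C]_k) (Z : 'M[C]_(m, k)) :
  orthonormal_cols Ps -> psd L -> B = Ps *m L -> frob (Z *m L) <= norm2 B * frob Z.
Proof.
move=> PsO Lpsd BE; set V := rsvec B.
have Vtu : ctmx V \is unitarymx by rewrite ctmx_unitary rsvec_unitary.
rewrite -[norm2 B](sqrCK (norm2_ge0 B)).
rewrite -sqrtCM ?nnegrE ?exprn_ge0 ?norm2_ge0 ?frob2_ge0 //.
rewrite ler_sqrtC ?nnegrE ?mulr_ge0 ?exprn_ge0 ?norm2_ge0 ?frob2_ge0 //.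
rewrite (polar_psd_factorE PsO Lpsd BE) -/V [in Z *m _]mulmxA.
rewrite frob2_mulmx_unitary ?rsvec_unitary // [in Z *m _]mulmxA frob2_mul_diag.
rewrite -(frob2_mulmx_unitary Z Vtu) mulr_sumr; apply: ler_sum => i _.
rewrite mxE ger0_norm ?sv_ge0 // ler_wpM2r ?gram_diag_ge0 //.
by rewrite lerXn2r ?nnegrE ?sv_ge0 ?norm2_ge0 ?sv_le_norm2.
Qed.

Lemma polar_dist_le n k (B Ps P : 'M[C]_(n, k)) (L : 'M[C]_k) :
  \rank B = k -> orthonormal_cols Ps -> orthonormal_cols P -> psd L ->
  B = Ps *m L ->
  frob (P - Ps) <= sqrtC (2 * (trnorm B - 'Re (\tr (ctmx P *m B))) / smin B).
Proof.
case: k => [|k] in B Ps P L *.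
  by move=> *; rewrite /frob /trnorm /mxtrace !big_ord0 raddf0 subr0 !mulr0 mul0r.
move=> rkB PsO PO Lpsd BE.
have bound : frob2 (P - Ps) <= 2 * (trnorm B - 'Re (\tr (ctmx P *m B))) / smin B.
  by rewrite ler_pdivlMr ?smin_gt0 // mulrC (polar_trace_bound PsO PO Lpsd BE).
by rewrite ler_sqrtC ?nnegrE ?frob2_ge0 ?(le_trans (frob2_ge0 _) bound).
Qed.

End PolarFactor.

Theorem theorem4p3 (C : numClosedFieldType) (n k : nat)
  (B Pstar P : 'M[C]_(n, k)) :
  (k <= n)%N -> \rank B = k ->
  polar_factor B Pstar ->
  orthonormal_cols P ->
  let eta := trnorm B - 'Re (\tr (ctmx P *m B)) in
  let eps := sqrtC (2 * eta / smin B) in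
  [/\ frob (B - P *m (ctmx P *m B)) / norm2 B <= sinThetaF P Pstar,
      sinThetaF P Pstar <= eps,
      (hpd (ctmx P *m B) ->
         frob (P - Pstar) <=
         (1 + 2 * norm2 B / (smin B + smin (ctmx P *m B))) * eps)
    & (same_range P Pstar -> frob (P - Pstar) <= eps)].
Proof.
(* [k <= n] is implied by [\rank B = k]. *)
move=> _ rkB [PsO [L [Lpsd BE]]] PO eta eps.
have dist_le : frob (P - Pstar) <= eps := polar_dist_le rkB PsO PO Lpsd BE.
have eps_ge0 : 0 <= eps := le_trans (frob_ge0 _) dist_le.
have residualE : B - P *m (ctmx P *m B) = (Pstar - P *m (ctmx P *m Pstar)) *m L.
  by rewrite BE mulmxBl !mulmxA.
split=> [||_|_ //].
- have [->|norm2_gt0] := eqVneq (norm2 B) 0.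
    by rewrite invr0 mulr0 sinThetaF_residual ?frob_ge0.
  rewrite mulrC ler_pdivrMl ?lt_def ?norm2_gt0 ?norm2_ge0 // residualE.
  by rewrite sinThetaF_residual // (frob_mul_psd_le _ PsO Lpsd BE).
- exact: le_trans (sinThetaF_le_dist PO PsO) dist_le.
- apply: le_trans dist_le _; rewrite ler_peMl // lerDl.
  by rewrite divr_ge0 ?addr_ge0 ?mulr_ge0 ?smin_ge0 ?norm2_ge0.
Qed.
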